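(* Let $n\ge2$, $\gamma\in\mathbb{R}$, $l,u\in\mathbb{R}^n$ with $l\le u$, and $\mathcal{X}=\{x\in\mathbb{R}^n:\sum_m x_m=\gamma,\ l_m\le x_m\le u_m\ \forall m\}\neq\emptyset$. Let $f:\mathbb{R}^n\to\mathbb{R}$ be differentiable and assume there is $L_2>0$ such that for all $x\in\mathcal{X}$, all $i\neq j$ and all $d$ with $d_i=-d_j$, $d_m=0$ for $m\notin\{i,j\}$ and $x+d\in\mathcal{X}$, $\|\nabla_{ij}f(x+d)-\nabla_{ij}f(x)\|_2\le L_2\|d\|_2$. Let $f^*=\inf_{\mathcal{X}}f$ and assume there is $\mu_2>0$ with \[ -L_2\min_{y\in\mathcal{X}}\Big\{\nabla f(x)^\top(y-x)+\tfrac{L_2}{2}\|y-x\|_2^2\Big\}\ge\mu_2(f(x)-f^* )\quad\text{for all }x\in\mathcal{X}. \] Let $x^0\in\mathcal{X}$ and $x^{k+1}=x^k+d^k$, where $(i_k,j_k,d^k)$ minimizes $\nabla f(x^k)^\top d+\frac{L_2}{2}\|d\|_2^2$ over all pairs $i\neq j$ and all $d$ with $d_i+d_j=0$, $d_m=0$ for $m\notin\{i,j\}$, and $x^k+d\in\mathcal{X}$ (the GS-q rule with step size $1/L_2$). Then for all $k\ge0$, \[ f(x^k)-f^*\le\Big(1-\frac{\mu_2}{L_2(n-1)}\Big)^k\big(f(x^0)-f^*\big). \]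
   Context: $\nabla_{ij}f(x)=(\nabla_if(x),\nabla_jf(x))\in\mathbb{R}^2$. The assumption on $\mu_2$ is the proximal-PL inequality in the 2-norm on the feasible set $\mathcal{X}$. *)

From HB Require Import structures.
From mathcomp Require Import all_boot all_order all_algebra.
From mathcomp Require Import all_classical all_reals all_analysis.
Set Implicit Arguments. Unset Strict Implicit. Unset Printing Implicit Defensive.
Import Order.TTheory GRing.Theory Num.Theory.
Import numFieldNormedType.Exports.
Local Open Scope classical_set_scope.
Local Open Scope ring_scope.

Definition norm2 {R : realType} {n : nat} (v : 'rV[R]_n) : R :=
  Num.sqrt (\sum_(m < n) v 0 m ^+ 2).

Definition dotv {R : realType} {n : nat} (v w : 'rV[R]_n) : R :=
  \sum_(m < n) v 0 m * w 0 m.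

Definition feasible {R : realType} {n : nat} (gamma : R) (l u : 'rV[R]_n) :
  set 'rV[R]_n :=
  [set x | \sum_(m < n) x 0 m = gamma /\ forall m, l 0 m <= x 0 m <= u 0 m].

Definition grad {R : realType} {n : nat} (f : 'rV[R]_n -> R) (x : 'rV[R]_n) :
  'rV[R]_n := \row_(i < n) ('d f x (delta_mx 0 i : 'rV[R]_n)).

Definition grad_ij {R : realType} {n : nat} (f : 'rV[R]_n -> R)
  (x : 'rV[R]_n) (i j : 'I_n) : 'rV[R]_2 :=
  \row_(k < 2) (if k == ord0 then grad f x 0 i else grad f x 0 j).

Definition pair_dir {R : realType} {n : nat} (i j : 'I_n) (d : 'rV[R]_n) : Prop :=
  i != j /\ d 0 i + d 0 j = 0 /\ forall m, m != i -> m != j -> d 0 m = 0.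

Definition qmodel {R : realType} {n : nat} (f : 'rV[R]_n -> R) (L : R)
  (x d : 'rV[R]_n) : R :=
  dotv (grad f x) d + L / 2 * norm2 d ^+ 2.

From HB Require Import structures.
From mathcomp Require Import all_boot all_order all_algebra.
From mathcomp Require Import all_classical all_reals all_analysis.
From mathcomp Require Import ring lra.
Import Order.TTheory GRing.Theory Num.Theory.
Import numFieldNormedType.Exports.
Local Open Scope classical_set_scope.
Local Open Scope ring_scope.

(* Along a pair direction d the gradient of f is L-Lipschitz, so the mean value
   theorem on the segment [x, x + d] gives the descent lemma
   f (x + d) <= f x + qmodel x d; hence one GS-q step decreases f by at least
   the optimal pair model value Q <= 0.  Conversely, any feasible displacement
   y - x has zero sum and can be peeled into at most n - 1 pair steps, each
   conformal to y - x (hence feasible from x); conformality makes the model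
   superadditive along this splitting, so (n - 1) Q lower-bounds the model over
   the whole feasible set.  The proximal-PL inequality then converts the
   per-step decrease into the contraction factor 1 - mu2 / (L2 (n - 1)). *)

Lemma cauchy_schwarz2 {R : realType} (a1 a2 b1 b2 : R) :
  a1 * b1 + a2 * b2 <= Num.sqrt (a1 ^+ 2 + a2 ^+ 2) * Num.sqrt (b1 ^+ 2 + b2 ^+ 2).
Proof.
rewrite -sqrtrM; last by rewrite addr_ge0 // sqr_ge0.
have [h|h] := leP (a1 * b1 + a2 * b2) 0; first exact: le_trans h (sqrtr_ge0 _).
rewrite -(ger0_norm (ltW h)) -sqrtr_sqr ler_sqrt; last first.
  by rewrite mulr_ge0 // addr_ge0 // sqr_ge0.
have := sqr_ge0 (a1 * b2 - a2 * b1); nra.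
Qed.

Section RowVectors.
Context {R : realType} {n : nat}.
Implicit Types (v w g h d D : 'rV[R]_n).

Definition sqnorm2 d : R := \sum_(m < n) d 0 m ^+ 2.

Lemma sqnorm2_ge0 d : 0 <= sqnorm2 d.
Proof. by apply: sumr_ge0 => m _; apply: sqr_ge0. Qed.

Lemma norm2E d : norm2 d = Num.sqrt (sqnorm2 d).
Proof. by []. Qed.

Lemma norm2_sqr d : norm2 d ^+ 2 = sqnorm2 d.
Proof. by rewrite norm2E sqr_sqrtr // sqnorm2_ge0. Qed.

Lemma norm2_ge0 d : 0 <= norm2 d.
Proof. exact: sqrtr_ge0. Qed.

Lemma norm2Z (c : R) d : 0 <= c -> norm2 (c *: d) = c * norm2 d.
Proof.
move=> c0; rewrite !norm2E; have -> : sqnorm2 (c *: d) = c ^+ 2 * sqnorm2 d.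
  by rewrite /sqnorm2 mulr_sumr; apply: eq_bigr => m _; rewrite mxE exprMn.
by rewrite sqrtrM ?sqr_ge0 // sqrtr_sqr ger0_norm.
Qed.

Lemma sum_rowD v w : \sum_m (v + w) 0 m = \sum_m v 0 m + \sum_m w 0 m.
Proof. by rewrite -big_split; apply: eq_bigr => m _; rewrite mxE. Qed.

Lemma sum_rowB v w : \sum_m (v - w) 0 m = \sum_m v 0 m - \sum_m w 0 m.
Proof. by rewrite -sumrB; apply: eq_bigr => m _; rewrite !mxE. Qed.

Lemma sum_rowZ (c : R) v : \sum_m (c *: v) 0 m = c * \sum_m v 0 m.
Proof. by rewrite mulr_sumr; apply: eq_bigr => m _; rewrite mxE. Qed.

Lemma dotvBr v D d : dotv v (D - d) = dotv v D - dotv v d.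
Proof. by rewrite /dotv -sumrB; apply: eq_bigr => m _; rewrite !mxE mulrBr. Qed.

Lemma dotv0 v : dotv v 0 = 0.
Proof. by rewrite /dotv big1 // => m _; rewrite mxE mulr0. Qed.

Lemma sqnorm20 : sqnorm2 0 = 0.
Proof. by rewrite /sqnorm2 big1 // => m _; rewrite mxE expr0n. Qed.

Lemma qmodel0 (f : 'rV[R]_n -> R) (L : R) x : qmodel f L x 0 = 0.
Proof. by rewrite /qmodel norm2_sqr dotv0 sqnorm20 mulr0 addr0. Qed.

Lemma sum_pair (F : 'I_n -> R) {i j : 'I_n} : i != j ->
  (forall m, m != i -> m != j -> F m = 0) -> \sum_m F m = F i + F j.
Proof.
move=> ij F0; rewrite (bigD1 i) //= (bigD1 j) 1?eq_sym //= big1 ?addr0 //.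
by move=> m /andP[mi mj]; apply: F0.
Qed.

Lemma dotv_pair {i j : 'I_n} v {d} : pair_dir i j d ->
  dotv v d = v 0 i * d 0 i + v 0 j * d 0 j.
Proof.
move=> [ij [_ d0]]; rewrite /dotv (sum_pair (fun m => v 0 m * d 0 m) ij) //.
by move=> m mi mj; rewrite d0 // mulr0.
Qed.

Lemma sqnorm2_pair {i j : 'I_n} {d} : pair_dir i j d ->
  sqnorm2 d = d 0 i ^+ 2 + d 0 j ^+ 2.
Proof.
move=> [ij [_ d0]]; rewrite /sqnorm2 (sum_pair (fun m => d 0 m ^+ 2) ij) //.
by move=> m mi mj; rewrite d0 // expr0n.
Qed.

Lemma sum_pair_dir {i j : 'I_n} {d} : pair_dir i j d -> \sum_m d 0 m = 0.
Proof. by move=> [ij [dij d0]]; rewrite (sum_pair (fun m => d 0 m) ij). Qed.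

Lemma pair_dirZ {i j : 'I_n} (c : R) {d} : pair_dir i j d -> pair_dir i j (c *: d).
Proof.
move=> [ij [dij d0]]; split=> //; split; first by rewrite !mxE -mulrDr dij mulr0.
by move=> m mi mj; rewrite mxE d0 // mulr0.
Qed.

Lemma dotv_pair_sub_le g h {d} {i j : 'I_n} :
  pair_dir i j d ->
  dotv g d - dotv h d <=
  Num.sqrt ((g 0 i - h 0 i) ^+ 2 + (g 0 j - h 0 j) ^+ 2) * norm2 d.
Proof.
move=> pd; rewrite !(dotv_pair _ pd) norm2E (sqnorm2_pair pd).
have := cauchy_schwarz2 (g 0 i - h 0 i) (g 0 j - h 0 j) (d 0 i) (d 0 j).
set s := Num.sqrt _ * _; lra.
Qed.

End RowVectors.

Lemma norm2_row2_sub {R : realType} (a b c e : R) :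
  norm2 ((\row_(k < 2) if k == ord0 then a else b) -
         \row_(k < 2) if k == ord0 then c else e) =
  Num.sqrt ((a - c) ^+ 2 + (b - e) ^+ 2).
Proof. by rewrite /norm2 !big_ord_recl big_ord0 addr0 !mxE. Qed.

Section PairDescent.
Context {R : realType} {n : nat} (f : 'rV[R]_n -> R).
Hypothesis hf : forall x, differentiable f x.

Lemma norm2_grad_ij_sub (z x : 'rV[R]_n) (i j : 'I_n) :
  norm2 (grad_ij f z i j - grad_ij f x i j) =
  Num.sqrt ((grad f z 0 i - grad f x 0 i) ^+ 2 + (grad f z 0 j - grad f x 0 j) ^+ 2).
Proof. exact: norm2_row2_sub. Qed.

Lemma diff_dotv (x d : 'rV[R]_n) : 'd f x d = dotv (grad f x) d.
Proof.
rewrite {1}(row_sum_delta d) raddf_sum /dotv; apply: eq_bigr => m _.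
by rewrite [LHS]linearZ /= mxE mulrC.
Qed.

Lemma derive_along_line (x d : 'rV[R]_n) (t : R) :
  is_derive t 1 (fun s : R => f (x + s *: d)) ('d f (x + t *: d) d).
Proof.
have line_diff (s : R) : is_diff s (fun s : R => x + s *: d) (fun s : R => s *: d).
  have := @is_diffD R R^o _ (fun _ => x) (fun s : R => s *: d) 0
    (fun s : R => s *: d) s.
  by move=> /(_ (is_diff_cst _ _) (is_diff_scalel _ _)); rewrite add0r.
have hc : differentiable (f \o (fun s : R => x + s *: d)) t.
  exact: differentiable_comp.
apply: DeriveDef; first exact/derivable1_diffP.
by rewrite deriveE // diff_comp //= diff_val scale1r.
Qed.

Lemma pair_descent (L : R) {x d : 'rV[R]_n} {i j : 'I_n} : pair_dir i j d ->
  (forall c, 0 <= c <= 1 ->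
     norm2 (grad_ij f (x + c *: d) i j - grad_ij f x i j) <= L * c * norm2 d) ->
  f (x + d) <= f x + qmodel f L x d.
Proof.
move=> pd hLip; set S := sqnorm2 d.
pose psi s := f (x + s *: d) - L / 2 * S * (s * s).
pose dpsi s := 'd f (x + s *: d) d - L / 2 * S * (s + s).
have psi_derive (s : R) : is_derive s 1 psi (dpsi s).
  have := is_deriveZ (L / 2 * S)
    (is_deriveM (is_derive_id s (1 : R)) (is_derive_id s 1)).
  move=> /(is_deriveB (derive_along_line x d s)).
  by rewrite /dpsi [s%:A]mulr1.
have psi_cont : {within `[0, 1], continuous psi}.
  by apply: derivable_within_continuous => s _; case: (psi_derive s).
have [c /[!in_itv]/= /andP[c0 c1]] :=
  MVT_segment ler01 (fun s _ => psi_derive s) psi_cont.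
(* Proved before any differential enters the context: lra compares atoms up to
   conversion, and comparing two differentials of f effectively never ends. *)
have mvt_bound (fxd fx a b : R) :
    fxd - L / 2 * S * 1 - fx = (a - L / 2 * S * (c + c)) * 1 ->
    a - b <= L * c * S -> fxd <= fx + (b + L / 2 * S).
  have e : L / 2 * S * (c + c) = L * c * S by field.
  lra.
rewrite /psi /dpsi !scale0r !scale1r !addr0 subr0 !mul0r mulr0 subr0 mulr1.
have dfc : 'd f (x + c *: d) d - 'd f x d <= L * c * S.
  rewrite [X in X - _](diff_dotv (x + c *: d) d) [X in _ - X](diff_dotv x d).
  have := dotv_pair_sub_le (grad f (x + c *: d)) (grad f x) pd.
  rewrite -norm2_grad_ij_sub => /le_trans; apply.
  rewrite /S -norm2_sqr expr2 mulrA ler_wpM2r ?norm2_ge0 //.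
  exact/hLip/andP.
rewrite /qmodel norm2_sqr -/S -(diff_dotv x d).
by move=> /mvt_bound; apply.
Qed.

End PairDescent.

Section ConformalDecomposition.
Context {R : realType} {n : nat}.
Implicit Types (g d D : 'rV[R]_n).

Definition conformal d D := forall m, 0 <= d 0 m <= D 0 m \/ D 0 m <= d 0 m <= 0.

Definition supp D : {set 'I_n} := [set m | D 0 m != 0].

Lemma conformal_refl D : conformal D D.
Proof. by move=> m; case: (leP 0 (D 0 m)) => h; [left|right]; lra. Qed.

Lemma conformal_trans {d D' D} : conformal d D' -> conformal D' D -> conformal d D.
Proof. by move=> h1 h2 m; case: (h1 m); case: (h2 m); lra. Qed.

Lemma conformal_subr {d D} : conformal d D -> conformal (D - d) D.
Proof. by move=> h m; rewrite !mxE; case: (h m); lra. Qed.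

Lemma sqnorm2_conformal {d D} :
  conformal d D -> sqnorm2 (D - d) + sqnorm2 d <= sqnorm2 D.
Proof.
move=> h; rewrite /sqnorm2 -big_split /=; apply: ler_sum => m _; rewrite !mxE.
by case: (h m) => /andP[h1 h2]; nra.
Qed.

Lemma zero_sum_pos {D} : \sum_m D 0 m = 0 -> D != 0 -> exists i, 0 < D 0 i.
Proof.
move=> D_sum D0; have [//|nopos] := pselect (exists i, 0 < D 0 i).
have oppD_ge0 m : true -> 0 <= - D 0 m.
  by move=> _; rewrite oppr_ge0 leNgt; apply/negP => Dm; apply: nopos; exists m.
have oppD_sum : \sum_m - D 0 m = 0 by rewrite sumrN D_sum oppr0.
move/eqP: D0; case; apply/rowP => m; rewrite mxE.
by apply/eqP; rewrite -oppr_eq0; apply/eqP; apply: (psumr_eq0P oppD_ge0).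
Qed.

Lemma zero_sum_neg {D} : \sum_m D 0 m = 0 -> D != 0 -> exists j, D 0 j < 0.
Proof.
move=> D_sum D0.
have oppD_sum : \sum_m (- D) 0 m = 0.
  by rewrite (eq_bigr (fun m => - D 0 m)) ?sumrN ?D_sum ?oppr0 // => m _; rewrite mxE.
have [|j] := zero_sum_pos oppD_sum; first by rewrite oppr_eq0.
by rewrite mxE oppr_gt0; exists j.
Qed.

Lemma zero_sum_supp_le1 {D} : \sum_m D 0 m = 0 -> (#|supp D| <= 1)%N -> D = 0.
Proof.
move=> D_sum; apply: contraTeq => D0; rewrite -ltnNge.
have [i Di] := zero_sum_pos D_sum D0; have [j Dj] := zero_sum_neg D_sum D0.
apply/card_gt1P; exists i, j; rewrite !inE; split.
- by rewrite gt_eqF.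
- by rewrite lt_eqF.
- by apply: contraTneq Di => ->; rewrite -leNgt ltW.
Qed.

Lemma conformal_pair_step {D} : \sum_m D 0 m = 0 -> D != 0 ->
  exists i j d,
    [/\ pair_dir i j d, conformal d D & (#|supp (D - d)| < #|supp D|)%N].
Proof.
move=> D_sum D0.
have [i Di] := zero_sum_pos D_sum D0; have [j Dj] := zero_sum_neg D_sum D0.
have ij : i != j by apply: contraTneq Di => ->; rewrite -leNgt ltW.
pose a := Num.min (D 0 i) (- D 0 j).
have a_gt0 : 0 < a by rewrite lt_min Di oppr_gt0.
have [a_le_Di a_le_Dj] : a <= D 0 i /\ a <= - D 0 j by rewrite !ge_min !lexx ?orbT.
pose d := \row_(m < n) (if m == i then a else if m == j then - a else 0) : 'rV[R]_n.
have di : d 0 i = a by rewrite mxE eqxx.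
have dj : d 0 j = - a by rewrite mxE eq_sym (negbTE ij) eqxx.
have dm m : m != i -> m != j -> d 0 m = 0.
  by move=> /negbTE mi /negbTE mj; rewrite mxE mi mj.
exists i, j, d; split.
- by split=> //; split=> //; rewrite di dj addrN.
- move=> m; have [->|mi] := eqVneq m i; first by rewrite di; lra.
  have [->|mj] := eqVneq m j; first by rewrite dj; lra.
  by rewrite dm //; case: (leP 0 (D 0 m)) => h; [left|right]; lra.
apply: proper_card; apply/properP; split.
  apply/fintype.subsetP => m; rewrite !inE mxE [(- d) _ _]mxE.
  have [->|mi] := eqVneq m i; first by rewrite (gt_eqF Di).
  have [->|mj] := eqVneq m j; first by rewrite (lt_eqF Dj).
  by rewrite dm // subr0.
have [a_Di|a_Dj] : a = D 0 i \/ a = - D 0 j.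
  by rewrite /a; case: leP => _; [left|right].
- exists i; first by rewrite inE (gt_eqF Di).
  by rewrite inE mxE [(- d) _ _]mxE di a_Di subrr eqxx.
- exists j; first by rewrite inE (lt_eqF Dj).
  by rewrite inE mxE [(- d) _ _]mxE dj a_Dj opprK addrN eqxx.
Qed.

Lemma conformal_decomp_le g D0 {L Q : R} : 0 <= L -> Q <= 0 ->
  (forall i j d, pair_dir i j d -> conformal d D0 ->
     Q <= dotv g d + L / 2 * sqnorm2 d) ->
  forall N D, (#|supp D| <= N.+1)%N -> \sum_m D 0 m = 0 -> conformal D D0 ->
  N%:R * Q <= dotv g D + L / 2 * sqnorm2 D.
Proof.
move=> L_ge0 Q_le0 hQ; elim=> [|N IH] D D_supp D_sum D_D0.
  by rewrite (zero_sum_supp_le1 D_sum D_supp) dotv0 sqnorm20 mulr0 addr0 mul0r.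
have [->|D_neq0] := eqVneq D 0.
  by rewrite dotv0 sqnorm20 mulr0 addr0 mulr_ge0_le0.
have [i [j [d [pd d_D d_supp]]]] := conformal_pair_step D_sum D_neq0.
have rest : N%:R * Q <= dotv g (D - d) + L / 2 * sqnorm2 (D - d).
  apply: IH; first exact: leq_trans d_supp D_supp.
    by rewrite sum_rowB D_sum (sum_pair_dir pd) subr0.
  exact: conformal_trans (conformal_subr d_D) D_D0.
have step := hQ i j d pd (conformal_trans d_D D_D0).
have split_sq : L / 2 * (sqnorm2 (D - d) + sqnorm2 d) <= L / 2 * sqnorm2 D.
  by rewrite ler_wpM2l ?divr_ge0 // sqnorm2_conformal.
rewrite dotvBr in rest; rewrite -natr1 mulrDl mul1r; lra.
Qed.

End ConformalDecomposition.

Section FeasibleSet.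
Context {R : realType} {n : nat} (gamma : R) (l u : 'rV[R]_n).
Local Notation X := (feasible gamma l u).

Lemma feasible_segment {x y} {c : R} :
  X x -> X y -> 0 <= c <= 1 -> X (x + c *: (y - x)).
Proof.
move=> [x_sum x_box] [y_sum y_box] /andP[c0 c1]; split.
  by rewrite sum_rowD sum_rowZ sum_rowB x_sum y_sum subrr mulr0 addr0.
move=> m; rewrite !mxE; have /andP[lx xu] := x_box m; have /andP[ly yu] := y_box m.
by apply/andP; split; nra.
Qed.

Lemma feasible_add_conformal {x y d} {i j : 'I_n} :
  X x -> X y -> pair_dir i j d -> conformal d (y - x) -> X (x + d).
Proof.
move=> [x_sum x_box] [_ y_box] pd d_yx; split.
  by rewrite sum_rowD x_sum (sum_pair_dir pd) addr0.
move=> m; have := d_yx m; rewrite !mxE.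
have /andP[lx xu] := x_box m; have /andP[ly yu] := y_box m.
by case=> /andP[h1 h2]; apply/andP; split; lra.
Qed.

Lemma feasible_image_lbound {f : 'rV[R]_n -> R} :
  continuous f -> has_lbound [set f y | y in X].
Proof.
move=> f_cont.
pose B := [set v : 'rV[R]_n | forall i, `[l 0 i, u 0 i]%classic (v ord0 i)].
have B_compact : compact B.
  apply: (@rV_compact _ _ (fun i => `[l 0 i, u 0 i]%classic)) => i.
  exact: segment_compact.
have f_contB : {within B, continuous f} by apply: continuous_subspaceT.
have [M [_ fB_bound]] := compact_bounded (continuous_compact f_contB B_compact).
exists (- (M + 1)) => _ [y [_ y_box] <-].
have By : B y by move=> i; rewrite /= in_itv /= (ord1 ord0) y_box.
have := fB_bound (M + 1) (ltr_pwDr ltr01 (lexx M)) (f y) (ex_intro2 _ _ y By erefl).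
by rewrite /= ler_norml => /andP[].
Qed.

Lemma pair_min_le_qmodel {f : 'rV[R]_n -> R} {L Q : R} {x y} :
  (2 <= n)%N -> 0 <= L -> X x -> X y ->
  (forall i j d, pair_dir i j d -> X (x + d) -> Q <= qmodel f L x d) ->
  (n - 1)%:R * Q <= qmodel f L x (y - x).
Proof.
move=> n_ge2 L_ge0 Xx Xy hQ.
have Q_le0 : Q <= 0.
  have zero_pair : pair_dir (Ordinal (ltnW n_ge2)) (Ordinal n_ge2) (0 : 'rV[R]_n).
    by split=> //; split=> [|m _ _]; rewrite !mxE ?addr0.
  by have := hQ _ _ _ zero_pair; rewrite addr0 qmodel0; apply.
rewrite /qmodel norm2_sqr; apply: (conformal_decomp_le _ (y - x) L_ge0 Q_le0).
- move=> i j d pd d_yx; rewrite -norm2_sqr.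
  exact: hQ i j d pd (feasible_add_conformal Xx Xy pd d_yx).
- rewrite subn1 prednK ?(ltnW n_ge2) //.
  by rewrite -[X in (_ <= X)%N]card_ord max_card.
- by case: Xx Xy => [x_sum _] [y_sum _]; rewrite sum_rowB x_sum y_sum subrr.
- exact: conformal_refl.
Qed.

End FeasibleSet.

Lemma gap_contraction {R : realType} (e e' Q I K L mu : R) :
  0 < K -> 0 < L -> e' <= e + Q -> K * Q <= I -> mu * e <= - L * I ->
  e' <= (1 - mu / (L * K)) * e.
Proof.
move=> K_gt0 L_gt0 descent KQ_le_I PL.
have LK_gt0 : 0 < L * K by rewrite mulr_gt0.
have LKQ : L * K * Q <= - mu * e.
  by have := ler_wpM2l (ltW L_gt0) KQ_le_I; rewrite mulrA; lra.
have Q_le : Q <= - mu * e / (L * K) by rewrite ler_pdivlMr // mulrC.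
have -> : (1 - mu / (L * K)) * e = e + - mu * e / (L * K).
  by rewrite mulrBl mul1r mulrAC !mulNr.
by apply: le_trans descent _; rewrite lerD2l.
Qed.

Lemma geometric_decay {R : realType} (e : nat -> R) (r : R) :
  (forall k, 0 <= e k) -> (forall k, e k.+1 <= r * e k) ->
  forall k, e k <= r ^+ k * e 0%N.
Proof.
move=> e_ge0 e_step; have [r_ge0|r_lt0] := leP 0 r.
  elim=> [|k IH]; first by rewrite expr0 mul1r.
  by rewrite (le_trans (e_step k)) // exprS -mulrA ler_wpM2l.
(* With r < 0 the sequence is identically zero. *)
have e0 : e 0%N = 0.
  by have := e_step 0%N; have := e_ge0 1%N; have := e_ge0 0%N; nra.
have ek k : e k = 0.
  elim: k => // k IH; apply/eqP; rewrite eq_le e_ge0 andbT.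
  by rewrite (le_trans (e_step k)) // IH mulr0.
by move=> k; rewrite ek e0 mulr0.
Qed.

Theorem mainTheorem11 (R : realType) (n : nat) (hn : (2 <= n)%N)
  (gamma : R) (l u : 'rV[R]_n)
  (hlu : forall m, l 0 m <= u 0 m)
  (hX : feasible gamma l u !=set0)
  (f : 'rV[R]_n -> R) (hf : forall x, differentiable f x)
  (L2 : R) (hL2 : 0 < L2)
  (hLip : forall (x d : 'rV[R]_n) (i j : 'I_n),
      feasible gamma l u x -> pair_dir i j d -> feasible gamma l u (x + d) ->
      norm2 (grad_ij f (x + d) i j - grad_ij f x i j) <= L2 * norm2 d)
  (mu2 : R) (hmu2 : 0 < mu2)
  (hPL : forall x, feasible gamma l u x ->
      - L2 * inf [set qmodel f L2 x (y - x) | y in feasible gamma l u]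
      >= mu2 * (f x - inf [set f y | y in feasible gamma l u]))
  (xs : nat -> 'rV[R]_n)
  (hx0 : feasible gamma l u (xs 0%N))
  (hGSq : forall k : nat, exists i j : 'I_n,
      pair_dir i j (xs k.+1 - xs k) /\ feasible gamma l u (xs k.+1) /\
      forall (i' j' : 'I_n) (d : 'rV[R]_n),
        pair_dir i' j' d -> feasible gamma l u (xs k + d) ->
        qmodel f L2 (xs k) (xs k.+1 - xs k) <= qmodel f L2 (xs k) d) :
  forall k : nat,
    f (xs k) - inf [set f y | y in feasible gamma l u]
    <= (1 - mu2 / (L2 * (n - 1)%:R)) ^+ k
       * (f (xs 0%N) - inf [set f y | y in feasible gamma l u]).
Proof.
set fs := inf [set f y | y in feasible gamma l u].
have f_cont : continuous f := fun x => differentiable_continuous (hf x).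
have fs_le x : feasible gamma l u x -> fs <= f x.
  by move=> Xx; apply: (ge_inf (feasible_image_lbound gamma l u f_cont)); exists x.
have Xxs k : feasible gamma l u (xs k).
  by case: k => // k; have [i [j [_ [Xk _]]]] := hGSq k.
apply: (geometric_decay (fun k => f (xs k) - fs)) => k /=.
  by rewrite subr_ge0 fs_le.
have [i [j [pd [Xk1 hmin]]]] := hGSq k.
set x := xs k; set d := xs k.+1 - x.
apply: (gap_contraction _ _ (qmodel f L2 x d)
  (inf [set qmodel f L2 x (y - x) | y in feasible gamma l u])).
- by rewrite ltr0n subn_gt0.
- by [].
- have <- : x + d = xs k.+1 by rewrite addrC subrK.
  rewrite addrAC lerD2r; apply: (pair_descent f hf L2 pd) => c c01.
  rewrite -mulrA -norm2Z; last by case/andP: c01.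
  exact: hLip _ _ _ _ (Xxs k) (pair_dirZ c pd)
    (feasible_segment gamma l u (Xxs k) Xk1 c01).
- apply: lb_le_inf; first by case: hX => y Xy; exists (qmodel f L2 x (y - x)), y.
  move=> _ [y Xy <-].
  exact: (pair_min_le_qmodel gamma l u hn (ltW hL2) (Xxs k) Xy).
- exact: hPL x (Xxs k).
Qed.
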